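(* Let $q$ be a prime power. Every $2$-$(n,k,\lambda)_q$ design is additive under $\mathrm{EA}(q^n)$.
   Context: A $2$-$(n,k,\lambda)_q$ design (subspace design) is a $2$-$\left(\frac{q^n-1}{q-1},\frac{q^k-1}{q-1},\lambda\right)$ design whose points are the points of $\mathrm{PG}(n-1,q)$ and whose blocks are (point sets of) certain $(k-1)$-dimensional projective subspaces of $\mathrm{PG}(n-1,q)$, such that every pair of distinct points lies in exactly $\lambda$ blocks. $\mathrm{EA}(q^n)$ denotes the elementary abelian group of order $q^n$. A design $(V,\mathscr B)$ is additive under an abelian group $G$ if there is an injective map $f:V\to G$ such that $\sum_{x\in B}f(x)=0$ for every block $B\in\mathscr B$. *)

From HB Require Import structures.
From mathcomp Require Import all_boot all_order all_algebra finalg.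
Set Implicit Arguments. Unset Strict Implicit. Unset Printing Implicit Defensive.
Import GRing.Theory.
Local Open Scope ring_scope.

(* Subspaces of F^n = 'rV[F]_n are {vspace 'rV[F]_n}.
   Points of PG(n-1,q): 1-dimensional subspaces.
   Blocks: k-dimensional subspaces, identified with the set of points they contain. *)

Definition is_point (F : finFieldType) (n : nat) (P : {vspace 'rV[F]_n}) : bool :=
  \dim P == 1%N.

Definition points_of (F : finFieldType) (n : nat) (B : {vspace 'rV[F]_n})
  : seq {vspace 'rV[F]_n} :=
  undup [seq <[v]>%VS | v <- enum 'rV[F]_n & (v != 0) && (v \in B)].

Definition subspace_2design (F : finFieldType) (n k lam : nat)
  (blocks : seq {vspace 'rV[F]_n}) : Prop :=
  [/\ uniq blocks,
      (forall B, B \in blocks -> \dim B = k) &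
      (forall P Q : {vspace 'rV[F]_n}, is_point P -> is_point Q -> P != Q ->
         count (fun B => (P <= B)%VS && (Q <= B)%VS) blocks = lam)].

Definition elem_abelian_of_order (G : finZmodType) (m : nat) : Prop :=
  #|G| = m /\ exists p, prime p /\ forall x : G, x *+ p = 0.

Definition additive_under (F : finFieldType) (n : nat)
  (blocks : seq {vspace 'rV[F]_n}) (G : finZmodType) : Prop :=
  exists f : {vspace 'rV[F]_n} -> G,
    {in [pred P | is_point P] &, injective f} /\
    forall B, B \in blocks -> \sum_(P <- points_of B) f P = 0.

From HB Require Import structures.
From mathcomp Require Import all_boot all_order all_algebra finalg.
From mathcomp Require Import all_fingroup all_solvable all_field.
Import GRing.Theory.
Local Open Scope ring_scope.

Set Implicit Arguments. Unset Strict Implicit. Unset Printing Implicit Defensive.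

(* Identify F^n with the field L = GF(q^n) through an F-linear bijection phi and
   send the point <v> to phi(v)^(q-1).  This is well defined because
   c^(q-1) = 1 for c in F^*, and injective because phi(v)^(q-1) = phi(w)^(q-1)
   makes phi(v)/phi(w) a root of X^q - X, i.e. an element of F.
   Since sum_(c in F) c^j is 0 for j < q-1 and -1 for j = q-1, the binomial
   expansion gives sum_(c in F) (y + c z)^(q-1) = -z^(q-1).  Splitting a
   subspace B of dimension >= 2 as U (+) <u>, the values phi(x)^(q-1) over B
   therefore sum to -q^(dim U) phi(u)^(q-1) = 0; every point of B is spanned by
   q-1 = -1 nonzero vectors, so the point values of B sum to 0 as well.
   Finally (L, +) is isomorphic to EA(q^n): both are elementary abelian groups
   of order q^n. *)

Section FinFieldPowerSums.
Variable F : finFieldType.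
Local Notation q := #|F|.

Lemma natr_finField_card : q%:R = 0 :> F.
Proof.
have [p p_pr pcharFp] := finPcharP F.
have q_gt1 := finNzRing_gt1 F; rewrite (card_pprimeChar pcharFp) in q_gt1 *.
by rewrite natrX (pcharf0 pcharFp) expr0n; case: logn q_gt1.
Qed.

Lemma natr_finField_card_pred : q.-1%:R = -1 :> F.
Proof.
apply/eqP; rewrite -addr_eq0 -(natrD _ _ 1) addn1.
by rewrite prednK ?natr_finField_card // ltnW ?finNzRing_gt1.
Qed.

Lemma mulrn_finField_card (V : lmodType F) (x : V) : x *+ q = 0.
Proof. by rewrite -scaler_nat natr_finField_card scale0r. Qed.

Lemma mulrn_finField_card_pred (V : lmodType F) (x : V) : x *+ q.-1 = - x.
Proof. by rewrite -scaler_nat natr_finField_card_pred scaleN1r. Qed.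

Lemma expf_card_pred (c : F) : c != 0 -> c ^+ q.-1 = 1.
Proof.
move=> c_neq0; apply: (mulfI c_neq0); rewrite mulr1 -exprS.
by rewrite prednK ?expf_card // ltnW ?finNzRing_gt1.
Qed.

Lemma sum_expf_card_pred : \sum_(c : F) c ^+ q.-1 = -1.
Proof.
rewrite (bigD1 0) //= expr0n gtn_eqF ?ltn_predRL ?finNzRing_gt1 // add0r.
rewrite (eq_bigr (fun=> 1)); last by move=> c /expf_card_pred.
by rewrite sumr_const cardC1 natr_finField_card_pred.
Qed.

Lemma sum_expf_lt_card_pred j : (j < q.-1)%N -> \sum_(c : F) c ^+ j = 0.
Proof.
case: j => [|j] j_lt; first by rewrite (eq_bigr (fun=> 1)) // sumr_const natr_finField_card.
have [a /andP[a_neq0 aj_neq1]] : exists a : F, (a != 0) && (a ^+ j.+1 != 1).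
  apply/existsP; apply: contraTT j_lt; rewrite negb_exists => /forallP unity.
  have /(max_unity_roots (ltn0Sn j)) : all j.+1.-unity_root (enum (predC1 (0 : F))).
    apply/allP=> c; rewrite mem_enum unity_rootE inE => c_neq0.
    by have := unity c; rewrite negb_and c_neq0 negbK.
  by rewrite enum_uniq -cardE cardC1 -leqNgt => /(_ isT).
(* multiplication by [a] permutes [F] *)
have sum_eq : \sum_c c ^+ j.+1 = a ^+ j.+1 * \sum_c c ^+ j.+1.
  rewrite mulr_sumr (reindex_inj (mulfI a_neq0)) /=.
  by apply: eq_bigr => c _; rewrite exprMn.
apply/eqP; apply: contraTT aj_neq1 => sum_neq0; rewrite negbK.
by apply/eqP/(mulIf sum_neq0); rewrite mul1r -sum_eq.
Qed.

End FinFieldPowerSums.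

Lemma separable_Xn_subX (R : idomainType) m :
  m%:R = 0 :> R -> separable_poly ('X^m - 'X : {poly R}).
Proof.
move=> m0; rewrite unlock derivB derivXn derivX -mulr_natr -polyC_natr m0 polyC0.
by rewrite mulr0 sub0r -[X in coprimep _ X]scaleN1r coprimepZr ?oppr_eq0 ?oner_eq0 ?coprimep1.
Qed.

Lemma card_fieldExt (F : finFieldType) (L : fieldExtType F) :
  #|FinFieldExtType L| = (#|F| ^ \dim {:L})%N.
Proof. by have := card_vspace (fullv : {vspace finvect_type L}); rewrite card_vspacef. Qed.

Lemma fieldExt_of_dim (F : finFieldType) n :
  (0 < n)%N -> exists L : fieldExtType F, \dim {:L} = n.
Proof.
move=> n_gt0; pose m := (#|F| ^ n)%N; pose P (R : nzRingType) : {poly R} := 'X^m - 'X.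
have m_gt1 : (1 < m)%N by rewrite (ltn_exp2l 0) // finNzRing_gt1.
have /FinSplittingFieldFor[L [zs DP defL]] : P F != 0.
  by rewrite -size_poly_eq0 size_polyDl ?size_polyXn // size_polyN size_polyX.
rewrite rmorphB rmorphXn /= map_polyX -/(P L) in DP.
exists L; apply/eqP; rewrite -(eqn_exp2l _ _ (finNzRing_gt1 F)) -card_fieldExt.
(* the roots of X^m - X are distinct and are the fixed points of Frobenius^n,
   which form a subfield containing them, hence all of L *)
have [a _ Da] := finField_galois_generator (sub1v {:L}).
rewrite dimv1 expn1 in Da.
have a_pow x : (a ^+ n)%g x = x ^+ m.
  rewrite /m; elim: (n) x => [|i IHi] x; first by rewrite gal_id.
  by rewrite expgSr galM ?memvf // Da ?memvf // IHi -exprM -expnSr.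
have zs_fixed : zs =i fixedSpace (a ^+ n)%g.
  move=> z; rewrite -root_prod_XsubC -(eqp_root DP) (sameP fixedSpaceP eqP).
  by rewrite /root !hornerE subr_eq0 a_pow.
have fixed_full : fixedSpace (a ^+ n)%g = {:L}%VS.
  apply/eqP; rewrite eqEsubv subvf -defL -[fixedSpace _]subfield_closed agenvS //.
  by rewrite subv_add sub1v; apply/span_subvP=> z; rewrite zs_fixed.
have zs_uniq : uniq zs.
  rewrite -separable_prod_XsubC -(eqp_separable DP) separable_Xn_subX //.
  by rewrite natrX -(rmorph_nat (in_alg L)) natr_finField_card rmorph0 expr0n gtn_eqF.
have /eq_card-> : FinFieldExtType L =i zs by move=> x; rewrite zs_fixed fixed_full memvf.
rewrite (card_uniqP _) // -[size zs]succnK -(size_prod_XsubC _ id) -(eqp_size DP).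
by rewrite size_polyDl ?size_polyXn // size_polyN size_polyX.
Qed.

Section VspaceSums.
Variables (F : finFieldType) (n : nat) (R : nmodType).
Implicit Types (u : 'rV[F]_n) (U V : {vspace 'rV[F]_n}) (g : 'rV[F]_n -> R).

Lemma sum_vline g u : u != 0 -> \sum_(x in <[u]>%VS) g x = \sum_(c : F) g (c *: u).
Proof.
move=> u_neq0; have scale_inj : injective (fun c : F => c *: u).
  move=> c d /eqP; rewrite -subr_eq0 -scalerBl scaler_eq0 (negPf u_neq0) orbF.
  by rewrite subr_eq0 => /eqP.
rewrite -(big_imset _ (in2W scale_inj)); apply: eq_bigl => x.
by apply/vlineP/imsetP => [[c ->]|[c _ ->]]; exists c.
Qed.

Lemma sum_addv_direct g U V : (U :&: V = 0)%VS ->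
  \sum_(x in (U + V)%VS) g x = \sum_(y in U) \sum_(z in V) g (y + z).
Proof.
move=> dxUV; pose pi := daddv_pi U V.
have pi_id y : y \in U -> pi y = y by apply: daddv_pi_id.
have pi_eq0 z : z \in V -> pi z = 0.
  move=> Vz; have UVz : z \in (U + V)%VS by rewrite -[z]add0r memv_add ?mem0v.
  have := daddv_pi_add dxUV UVz; rewrite (daddv_pi_id _ Vz); last by rewrite capvC.
  by move/(congr1 (fun w => w - z)); rewrite addrK subrr.
rewrite (partition_big pi (fun y => y \in U)) => [|x _]; last exact: memv_pi.
apply: eq_bigr => y Uy; rewrite (reindex_onto (fun z => y + z) (fun x => x - y)) /=.
  apply: eq_bigl => z; rewrite [y + z - y]addrC addKr eqxx andbT.
  apply/andP/idP => [[UVx /eqP pi_x]|Vz].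
    have := daddv_pi_add dxUV UVx; rewrite pi_x => /addrI <-.
    exact: memv_pi.
  by split; rewrite ?memv_add // linearD /= pi_id // pi_eq0 // addr0.
by move=> x _; rewrite addrC subrK.
Qed.

End VspaceSums.

Section FieldExtPowerSums.
Variables (F : finFieldType) (L : fieldExtType F).
Local Notation q := #|F|.

Lemma sum_expf_card_pred_line (y z : L) :
  \sum_(c : F) (y + c *: z) ^+ q.-1 = - z ^+ q.-1.
Proof.
have binomial c : (y + c *: z) ^+ q.-1 =
    \sum_(i < q.-1.+1) c ^+ i *: (y ^+ (q.-1 - i) * z ^+ i *+ 'C(q.-1, i)).
  by rewrite exprDn; apply: eq_bigr => i _; rewrite exprZn -scalerMnr scalerAr.
rewrite (eq_bigr _ (fun c _ => binomial c)) exchange_big big_ord_recr /=.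
rewrite big1 => [|i _]; last by rewrite -scaler_suml sum_expf_lt_card_pred ?scale0r.
by rewrite add0r -scaler_suml sum_expf_card_pred subnn expr0 mul1r binn scaleN1r.
Qed.

Variables (n : nat) (phi : {linear 'rV[F]_n -> L}).

Lemma sum_vspace_expf_card_pred (B : {vspace 'rV[F]_n}) :
  (2 <= \dim B)%N -> \sum_(x in B) phi x ^+ q.-1 = 0.
Proof.
move=> dimB; set u := vpick B; set U := (B :\: <[u]>)%VS.
have u_neq0 : u != 0 by rewrite vpick0 -dimv_eq0 -lt0n (leq_trans _ dimB).
have B_eq : (U + <[u]>)%VS = B.
  by rewrite addv_diff; apply/addv_idPl; rewrite -memvE memv_pick.
have dimU : (0 < \dim U)%N.
  by move: dimB; rewrite -B_eq dimv_disjoint_sum ?capv_diff // dim_vline u_neq0 addn1.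
rewrite -B_eq sum_addv_direct ?capv_diff //.
rewrite (eq_bigr (fun=> - phi u ^+ q.-1)) => [|y _]; last first.
  rewrite sum_vline //; under eq_bigr do rewrite linearD linearZ.
  exact: sum_expf_card_pred_line.
rewrite sumr_const card_vspace -(prednK dimU) expnS mulrnA.
by rewrite mulrn_finField_card mul0rn.
Qed.

End FieldExtPowerSums.

Section Points.
Variables (F : finFieldType) (n : nat).
Local Notation q := #|F|.
Implicit Types (v w : 'rV[F]_n) (P B : {vspace 'rV[F]_n}).

Lemma vline_vpick P : is_point P -> <[vpick P]>%VS = P.
Proof.
move=> /eqP dimP; have P_neq0 : vpick P != 0 by rewrite vpick0 -dimv_eq0 dimP.
by apply/eqP; rewrite eqEdim -memvE memv_pick dimP dim_vline P_neq0.
Qed.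

Lemma eq_vline v w : v != 0 -> (<[v]>%VS == <[w]>%VS) = (v \in <[w]>%VS).
Proof.
move=> v_neq0; apply/eqP/idP => [<-|vw]; first exact: memv_line.
by apply/eqP; rewrite eqEdim -memvE vw !dim_vline v_neq0 leq_b1.
Qed.

Lemma count_points_of_seq B w : w != 0 -> w \in B ->
  count_mem <[w]>%VS [seq <[v]>%VS | v <- enum 'rV[F]_n & (v != 0) && (v \in B)] = q.-1.
Proof.
move=> w_neq0 Bw; rewrite count_map count_filter enumT -size_filter.
have := card_vspace <[w]>; rewrite dim_vline w_neq0 expn1 (cardD1 0) mem0v => <- /=.
rewrite cardE /enum_mem; congr size; apply: eq_filter => v; rewrite !inE /= andbC -andbA.
have [//|v_neq0] := eqVneq v 0; rewrite eq_vline //= andb_idl //.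
by case/vlineP=> c ->; rewrite memvZ.
Qed.

Lemma sum_points_of (R : nmodType) (g : {vspace 'rV[F]_n} -> R) B :
  \sum_(P <- points_of B) g P *+ q.-1 = \sum_(v in B | v != 0) g <[v]>%VS.
Proof.
rewrite /points_of; set s := [seq _ | v <- _ & _].
transitivity (\sum_(P <- undup s) iterop (count_mem P s) +%R (g P) 0).
  apply: eq_big_seq => P; rewrite mem_undup => /mapP[v].
  rewrite mem_filter => /andP[/andP[v_neq0 Bv] _] ->.
  by rewrite count_points_of_seq // Monoid.iteropE iter_addr_0.
rewrite big_undup_iterop_count big_map big_filter big_enum_cond.
by apply: eq_bigl => v; rewrite [RHS]andbC.
Qed.

End Points.

Section PointPower.
Variables (F : finFieldType) (L : fieldExtType F) (n : nat).
Variable phi : {linear 'rV[F]_n -> L}.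
Hypothesis phi_inj : injective phi.
Local Notation q := #|F|.
Implicit Types (v : 'rV[F]_n) (P B : {vspace 'rV[F]_n}).

Definition point_pow P : L := phi (vpick P) ^+ q.-1.

Lemma point_pow_vline v : v != 0 -> point_pow <[v]> = phi v ^+ q.-1.
Proof.
move=> v_neq0; have /vlineP[c pick_v] := memv_pick <[v]>%VS.
have pick_neq0 : vpick <[v]> != 0 by rewrite vpick0 -dimv_eq0 dim_vline v_neq0.
have c_neq0 : c != 0 by apply: contraNneq pick_neq0 => c0; rewrite pick_v c0 scale0r.
by rewrite /point_pow pick_v linearZ exprZn expf_card_pred // scale1r.
Qed.

Lemma point_pow_inj : {in [pred P | is_point P] &, injective point_pow}.
Proof.
move=> P Q /[!inE] pointP pointQ; rewrite /point_pow.
have phi_pick_neq0 R : is_point R -> phi (vpick R) != 0.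
  move=> pointR; rewrite -(linear0 phi) (inj_eq phi_inj) vpick0 -dimv_eq0.
  by rewrite (eqP pointR).
set a := phi (vpick P); set b := phi (vpick Q) => eq_pow.
have b_neq0 := phi_pick_neq0 _ pointQ.
(* (a / b)^(q-1) = 1, so a / b is fixed by the Frobenius map and lies in F *)
have /vlineP[c ab] : a / b \in (1%AS : {subfield L}).
  rewrite Fermat's_little_theorem dimv1 expn1 -(prednK (ltnW (finNzRing_gt1 F))).
  by rewrite exprS exprMn eq_pow -exprMn divff // expr1n mulr1.
have : vpick P \in Q.
  rewrite -(vline_vpick pointQ) (phi_inj (_ : a = phi (c *: vpick Q))) ?memvZ ?memv_line //.
  by rewrite linearZ -/b -[a](divfK b_neq0) ab mulr_algl.
rewrite memvE (vline_vpick pointP) => sPQ; apply/eqP.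
by rewrite eqEdim sPQ (eqP pointP) (eqP pointQ).
Qed.

Lemma sum_points_of_point_pow B : (2 <= \dim B)%N -> \sum_(P <- points_of B) point_pow P = 0.
Proof.
move=> dimB; apply/eqP; rewrite -oppr_eq0 -sumrN.
under eq_bigr do rewrite -mulrn_finField_card_pred.
rewrite sum_points_of; have := sum_vspace_expf_card_pred phi dimB.
rewrite (bigD1 0) ?mem0v //= linear0 expr0n gtn_eqF ?ltn_predRL ?finNzRing_gt1 // add0r.
move=> sum_eq0; apply/eqP; rewrite -[RHS]sum_eq0.
by apply: eq_bigr => v /andP[_]; apply: point_pow_vline.
Qed.

End PointPower.

Lemma zmod_abelem (A : finZmodType) p :
  prime p -> (forall x : A, x *+ p = 0) -> (p.-abelem [set: A])%g.
Proof.
move=> p_pr pA; apply/abelemP => //; split; first exact: FinRing.zmod_abelian.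
by move=> x _; rewrite FinRing.zmodXgE pA.
Qed.

Lemma zmod_prime_exponent_iso (A B : finZmodType) p p' :
  prime p -> prime p' -> (forall x : A, x *+ p = 0) -> (forall x : B, x *+ p' = 0) ->
  (1 < #|A|)%N -> #|A| = #|B| ->
  exists h : A -> B, injective h /\ {morph h : x y / x + y}.
Proof.
move=> p_pr p'_pr pA p'B A_gt1 cardAB.
have abA := zmod_abelem p_pr pA; have abB := zmod_abelem p'_pr p'B.
have p_eq : p = p'.
  have := abelem_pgroup abA; have := abelem_pgroup abB.
  rewrite /pgroup !cardsT -cardAB => /pnatPpi p'_pi /pnatPpi p_pi.
  have pdivA : pdiv #|A| \in \pi(#|A|) by rewrite pi_pdiv.
  by move: (p_pi _ pdivA) (p'_pi _ pdivA); rewrite !inE => /eqP <- /eqP.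
rewrite -p_eq in abB.
have /isogP[f f_inj _] : ([set: A] \isog [set: B])%g.
  by rewrite (isog_abelem_card _ abA) abB /= !cardsT cardAB.
exists f; split; last by move=> x y; apply: (morphM f); rewrite inE.
by move=> x y fxy; apply: (injmP f_inj); rewrite ?inE.
Qed.

Section LinearEmbedding.
Import passmx.

Lemma rV_linear_inj (F : fieldType) (L : vectType F) (n : nat) :
  \dim {:L} = n -> exists phi : {linear 'rV[F]_n -> L}, injective phi.
Proof.
move=> <-; exists (vecof (vbasis {:L}) : {linear _ -> L}).
exact: can_inj (vecofK (vbasisP fullv)).
Qed.

End LinearEmbedding.

Lemma dimv_rV0 (F : fieldType) (V : {vspace 'rV[F]_0}) : \dim V = 0%N.
Proof. by apply/eqP; rewrite -leqn0 (leq_trans (dimvS (subvf V))) // dimvf. Qed.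

Theorem theorem5p1 (F : finFieldType) (n k lam : nat)
  (blocks : seq {vspace 'rV[F]_n}) (G : finZmodType) :
  (2 <= k)%N ->
  @subspace_2design F n k lam blocks ->
  elem_abelian_of_order G (#|F| ^ n)%N ->
  @additive_under F n blocks G.
Proof.
move=> k_ge2 [_ dim_blocks _] [cardG [p' [p'_pr p'G]]].
have [n0|n_gt0] := posnP n.
  subst n; exists (fun=> 0); split=> [P Q|B /dim_blocks].
    by rewrite inE /is_point dimv_rV0.
  by rewrite dimv_rV0 => k0; rewrite -k0 in k_ge2.
have [L dimL] := fieldExt_of_dim F n_gt0.
have [phi phi_inj] := rV_linear_inj dimL.
have [p p_pr pcharF] := finPcharP F.
have pL (x : FinFieldExtType L) : x *+ p = 0 by apply: mulrn_pchar; rewrite pchar_lalg.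
have cardL : #|FinFieldExtType L| = #|G| by rewrite card_fieldExt dimL cardG.
have [h [h_inj hD]] := zmod_prime_exponent_iso p_pr p'_pr pL p'G (finNzRing_gt1 _) cardL.
have h0 : h 0 = 0 by apply: (addIr (h 0)); rewrite -hD !add0r.
exists (h \o point_pow phi); split=> [P Q pointP pointQ /h_inj|B /dim_blocks dimB].
  exact: point_pow_inj.
by rewrite -(big_morph h hD h0) sum_points_of_point_pow ?dimB.
Qed.
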